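(* Consider a mean-variance team stochastic game as described in the context. Let $\boldsymbol{\mu},\boldsymbol{\mu}'\in\mathcal{U}$ and define $\mathcal{L}_f^{\boldsymbol{\mu}}(\boldsymbol{\mu}')=\mathbb{E}_{s\sim\pi^{\boldsymbol{\mu}},\boldsymbol{a}\sim\boldsymbol{\mu}'(\cdot|s)}[A_f^{\boldsymbol{\mu}}(s,\boldsymbol{a})]$, $\mathcal{L}^{\boldsymbol{\mu}}(\boldsymbol{\mu}')=\mathbb{E}_{s\sim\pi^{\boldsymbol{\mu}},\boldsymbol{a}\sim\boldsymbol{\mu}'(\cdot|s)}[A^{\boldsymbol{\mu}}(s,\boldsymbol{a})]$, $\epsilon_f=\max_s|\mathbb{E}_{\boldsymbol{a}\sim\boldsymbol{\mu}'(\cdot|s)}[A_f^{\boldsymbol{\mu}}(s,\boldsymbol{a})]|$, $\epsilon_\eta=\max_s|\mathbb{E}_{\boldsymbol{a}\sim\boldsymbol{\mu}'(\cdot|s)}[A^{\boldsymbol{\mu}}(s,\boldsymbol{a})]|$, and $H=\max\big(0,\ \mathcal{L}^{\boldsymbol{\mu}}(\boldsymbol{\mu}')-2(\kappa^*-1)\epsilon_\eta D_{\mathrm{TV}}(\boldsymbol{\mu}',\boldsymbol{\mu}),\ -\mathcal{L}^{\boldsymbol{\mu}}(\boldsymbol{\mu}')-2(\kappa^*-1)\epsilon_\eta D_{\mathrm{TV}}(\boldsymbol{\mu}',\boldsymbol{\mu})\big)$. Then $$J(\boldsymbol{\mu}')-J(\boldsymbol{\mu})\ge\mathcal{L}_f^{\boldsymbol{\mu}}(\boldsymbol{\mu}')-2(\kappa^*-1)\epsilon_fD_{\mathrm{TV}}(\boldsymbol{\mu}',\boldsymbol{\mu})+\beta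 H^2 .$$
   Context: Game: finite agents $\mathcal{N}=\{1,\dots,N\}$, finite state space $\mathcal{S}$, finite action sets $\mathcal{A}_i$, $\mathcal{A}=\prod_i\mathcal{A}_i$, transition kernel $P(s'|s,\boldsymbol{a})$, common reward $r:\mathcal{S}\times\mathcal{A}\to\mathbb{R}$. Policies $\mu_i:\mathcal{S}\to\Delta(\mathcal{A}_i)$ (set $\mathcal{U}_i$); joint policies $\boldsymbol{\mu}\in\mathcal{U}=\prod_i\mathcal{U}_i$ with $\boldsymbol{\mu}(\boldsymbol{a}|s)=\prod_i\mu_i(a_i|s)$. Standing assumption: the chain $P^{\boldsymbol{\mu}}(s'|s)=\sum_{\boldsymbol{a}}\boldsymbol{\mu}(\boldsymbol{a}|s)P(s'|s,\boldsymbol{a})$ is ergodic for every $\boldsymbol{\mu}\in\mathcal{U}$, stationary distribution $\pi^{\boldsymbol{\mu}}$. $\eta^{\boldsymbol{\mu}}=\sum_s\pi^{\boldsymbol{\mu}}(s)\sum_{\boldsymbol{a}}\boldsymbol{\mu}(\boldsymbol{a}|s)r(s,\boldsymbol{a})$; $\zeta^{\boldsymbol{\mu}}=\sum_s\pi^{\boldsymbol{\mu}}(s)\sum_{\boldsymbol{a}}\boldsymbol{\mu}(\boldsymbol{a}|s)(r(s,\boldsymbol{a})-\eta^{\boldsymbol{\mu}})^2$; for fixed $\beta\ge0$, $J(\boldsymbol{\mu})=\eta^{\boldsymbol{\mu}}-\beta\zeta^{\boldsymbol{\mu}}$. For a per-step reward $g$ (either $g=r$ with average $\eta^{\boldsymbol{\mu}}$,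 or $g=f^{\boldsymbol{\mu}}$ with $f^{\boldsymbol{\mu}}(s,\boldsymbol{a})=r(s,\boldsymbol{a})-\beta(r(s,\boldsymbol{a})-\eta^{\boldsymbol{\mu}})^2$ and average $J(\boldsymbol{\mu})$), let $\bar g$ be its stationary average, $V$ a solution of $V(s)=\sum_{\boldsymbol{a}}\boldsymbol{\mu}(\boldsymbol{a}|s)g(s,\boldsymbol{a})-\bar g+\sum_{s'}P^{\boldsymbol{\mu}}(s'|s)V(s')$ (unique up to an additive constant), $Q(s,\boldsymbol{a})=g(s,\boldsymbol{a})-\bar g+\sum_{s'}P(s'|s,\boldsymbol{a})V(s')$ and advantage $Q-V$. $A^{\boldsymbol{\mu}}$ denotes this advantage for $g=r$ (average-reward advantage) and $A_f^{\boldsymbol{\mu}}$ for $g=f^{\boldsymbol{\mu}}$. $D_{\mathrm{TV}}(\boldsymbol{\mu}',\boldsymbol{\mu})=\mathbb{E}_{s\sim\pi^{\boldsymbol{\mu}}}\big[\tfrac12\sum_{\boldsymbol{a}}|\boldsymbol{\mu}'(\boldsymbol{a}|s)-\boldsymbol{\mu}(\boldsymbol{a}|s)|\big]$. $\kappa^{\boldsymbol{\mu}}$ is Kemeny's constant of the chain $P^{\boldsymbol{\mu}}$, taken as the trace of the fundamental matrix $(I-P^{\boldsymbol{\mu}}+\boldsymbol{e}\pi^{\boldsymbol{\mu}})^{-1}$ (equivalently $\sum_{s'}\pi^{\boldsymbol{\mu}}(s')m^{\boldsymbol{\mu}}(s,s')$ with $m^{\boldsymbol{\mu}}(s,s')$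 the mean first time $t\ge1$ to reach $s'$ from $s$), and $\kappa^*=\max_{\boldsymbol{\mu}\in\mathcal{U}}\kappa^{\boldsymbol{\mu}}$. *)

From HB Require Import structures.
From mathcomp Require Import all_boot all_order all_algebra.
From mathcomp Require Import reals.
Set Implicit Arguments. Unset Strict Implicit. Unset Printing Implicit Defensive.
Import Order.TTheory GRing.Theory Num.Theory.
Local Open Scope ring_scope.

Section Game.
Variables (R : realType) (S : finType) (I : finType) (A : I -> finType).

Definition jact := {dffun forall i : I, A i}.

Definition policy := forall i : I, S -> A i -> R.

Definition is_policy (mu : policy) : Prop :=
  forall i s, (forall a, 0 <= mu i s a) /\ \sum_(a : A i) mu i s a = 1.

Definition jprob (mu : policy) (s : S) (a : jact) : R := \prod_(i : I) mu i s (a i).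

Definition is_kernel (P : S -> jact -> S -> R) : Prop :=
  forall s a, (forall s', 0 <= P s a s') /\ \sum_(s' : S) P s a s' = 1.

Definition Pmu (P : S -> jact -> S -> R) (mu : policy) (s s' : S) : R :=
  \sum_(a : jact) jprob mu s a * P s a s'.

Definition chain_mx (Q : S -> S -> R) : 'M[R]_#|S| :=
  \matrix_(i, j) Q (enum_val i) (enum_val j).

(* ergodic finite chain: irreducible and aperiodic, i.e. some power has all
   entries positive *)
Definition ergodic (Q : S -> S -> R) : Prop :=
  exists k : nat, forall i j, 0 < (chain_mx Q ^+ k) i j.

Definition stationary (Q : S -> S -> R) (pi : S -> R) : Prop :=
  [/\ forall s, 0 <= pi s, \sum_(s : S) pi s = 1 &
      forall s', \sum_(s : S) pi s * Q s s' = pi s'].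

(* Kemeny's constant: trace of the fundamental matrix (I - P + e pi)^-1 *)
Definition kemeny (Q : S -> S -> R) (pi : S -> R) : R :=
  \tr (invmx (1%:M - chain_mx Q + \matrix_(i, j) pi (enum_val j))).

Definition avg (pi : S -> R) (mu : policy) (g : S -> jact -> R) : R :=
  \sum_(s : S) pi s * \sum_(a : jact) jprob mu s a * g s a.

Definition etaR (pi : S -> R) (mu : policy) (r : S -> jact -> R) : R :=
  avg pi mu r.

Definition zeta (pi : S -> R) (mu : policy) (r : S -> jact -> R) : R :=
  avg pi mu (fun s a => (r s a - etaR pi mu r) ^+ 2).

Definition Jmv (beta : R) (pi : S -> R) (mu : policy) (r : S -> jact -> R) : R :=
  etaR pi mu r - beta * zeta pi mu r.

Definition fmu (beta : R) (pi : S -> R) (mu : policy) (r : S -> jact -> R)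
  (s : S) (a : jact) : R :=
  r s a - beta * (r s a - etaR pi mu r) ^+ 2.

Definition is_bias (P : S -> jact -> S -> R) (mu : policy)
  (g : S -> jact -> R) (gbar : R) (V : S -> R) : Prop :=
  forall s, V s = \sum_(a : jact) jprob mu s a * g s a - gbar
                  + \sum_(s' : S) Pmu P mu s s' * V s'.

Definition Qval (P : S -> jact -> S -> R) (g : S -> jact -> R) (gbar : R)
  (V : S -> R) (s : S) (a : jact) : R :=
  g s a - gbar + \sum_(s' : S) P s a s' * V s'.

Definition adv (P : S -> jact -> S -> R) (g : S -> jact -> R) (gbar : R)
  (V : S -> R) (s : S) (a : jact) : R :=
  Qval P g gbar V s a - V s.

Definition pexp (mu' : policy) (F : S -> jact -> R) (s : S) : R :=
  \sum_(a : jact) jprob mu' s a * F s a.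

Definition surr (pi : S -> R) (mu' : policy) (F : S -> jact -> R) : R :=
  \sum_(s : S) pi s * pexp mu' F s.

Definition epsmax (mu' : policy) (F : S -> jact -> R) : R :=
  \big[Num.max/0]_(s : S) `|pexp mu' F s|.

Definition DTV (pi : S -> R) (mu' mu : policy) : R :=
  \sum_(s : S) pi s * (2^-1 * \sum_(a : jact) `|jprob mu' s a - jprob mu s a|).

End Game.

(* Since [pi'] is stationary for [mu'], averaging an advantage [g - gbar + P V - V]
   over [pi'] and [mu'] cancels the [V]-terms, whatever [V] is.  Hence
   E_{pi',mu'}[A_f] = E_{pi',mu'}[f^mu] - J(mu) and E_{pi',mu'}[A] = eta' - eta =: d, and
   expanding the two variances gives J(mu') - J(mu) = E_{pi',mu'}[A_f] + beta d^2.
   Replacing [pi'] by [pi] in these averages costs at most eps ||pi' - pi||_1, and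
   ||pi' - pi||_1 <= (kappa^mu' - 1) ||pi P' - pi||_1 <= 2 (kappa* - 1) D_TV: the first
   inequality comes from pi' - pi = (pi P' - pi) Z for the fundamental matrix
   Z = (I - P' + e pi')^-1 of [mu'], whose columns are maximal on the diagonal.
   Finally |d - L| <= 2 (kappa* - 1) eps_eta D_TV forces H <= |d|. *)

From HB Require Import structures.
From mathcomp Require Import all_boot all_order all_algebra.
From mathcomp Require Import reals ring lra.
Set Implicit Arguments. Unset Strict Implicit. Unset Printing Implicit Defensive.
Import Order.TTheory GRing.Theory Num.Theory.
Local Open Scope ring_scope.

Section StochasticMatrix.
Variables (R : realFieldType) (n : nat).
Local Notation e := (const_mx 1 : 'cV[R]_n).

Lemma mulmx_ones m (M : 'M[R]_(m, n)) i k : (M *m e) i k = \sum_j M i j.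
Proof. by rewrite mxE; apply: eq_bigr => j _; rewrite mxE mulr1. Qed.

Lemma row_mul_ones (v : 'rV[R]_n) : \sum_j v 0 j = 1 -> v *m e = 1%:M.
Proof. by move=> v1; apply/matrixP => i j; rewrite mulmx_ones !ord1 v1 mxE. Qed.

Lemma expmx_fixl (M : 'M[R]_n) (v : 'rV[R]_n) k : v *m M = v -> v *m M ^+ k = v.
Proof.
move=> vM; elim: k => [|k IHk]; first by rewrite expr0 mulmx1.
by rewrite exprSr -mulmxE mulmxA IHk.
Qed.

Lemma expmx_fixr (M : 'M[R]_n) (z : 'cV[R]_n) k : M *m z = z -> M ^+ k *m z = z.
Proof.
move=> Mz; elim: k => [|k IHk]; first by rewrite expr0 mul1mx.
by rewrite exprS -mulmxE -mulmxA IHk.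
Qed.

Lemma expmx_ge0 (M : 'M[R]_n) k : (forall i j, 0 <= M i j) -> forall i j, 0 <= (M ^+ k) i j.
Proof.
move=> M_ge0; elim: k => [|k IHk] i j; first by rewrite expr0 mxE ler0n.
by rewrite exprS -mulmxE mxE; apply: sumr_ge0 => l _; apply: mulr_ge0.
Qed.

Lemma avg_eq_max_const (W : 'M[R]_n) (z : 'I_n -> R) i0 :
  (forall j, 0 < W i0 j) -> \sum_j W i0 j = 1 ->
  (forall j, z j <= z i0) -> \sum_j W i0 j * z j = z i0 ->
  forall j, z j = z i0.
Proof.
move=> W_gt0 W_row1 z_max Wz j.
have : \sum_j W i0 j * (z i0 - z j) = 0.
  under eq_bigr do rewrite mulrBr.
  by rewrite sumrB -mulr_suml W_row1 mul1r Wz subrr.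
move/psumr_eq0P => terms0.
have /eqP : W i0 j * (z i0 - z j) = 0.
  by apply: terms0 => // k _; apply: mulr_ge0; [exact: ltW | rewrite subr_ge0].
by rewrite mulf_eq0 gt_eqF //= subr_eq0 => /eqP.
Qed.
End StochasticMatrix.

Section FundamentalMatrix.
Variables (R : realFieldType) (n : nat) (Q : 'M[R]_n) (p : 'rV[R]_n).
Hypotheses (Q_ge0 : forall i j, 0 <= Q i j) (Q_row1 : forall i, \sum_j Q i j = 1).
Hypotheses (p_ge0 : forall j, 0 <= p 0 j) (p_sum1 : \sum_j p 0 j = 1).
Hypothesis p_stationary : p *m Q = p.
Hypothesis Q_regular : exists k, forall i j, 0 < (Q ^+ k) i j.

Local Notation e := (const_mx 1 : 'cV[R]_n).

Definition fundmx : 'M[R]_n := 1%:M - Q + e *m p.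
Local Notation Z := (invmx fundmx).

Lemma stochastic_ones : Q *m e = e.
Proof. by apply/colP => i; rewrite mulmx_ones Q_row1 mxE. Qed.

Lemma fundmx_ones : fundmx *m e = e.
Proof.
rewrite /fundmx !mulmxDl mulNmx mul1mx stochastic_ones subrr add0r.
by rewrite -mulmxA row_mul_ones // mulmx1.
Qed.

Lemma stationary_fundmx : p *m fundmx = p.
Proof.
rewrite /fundmx !mulmxDr mulmxN mulmx1 p_stationary subrr add0r.
by rewrite mulmxA row_mul_ones // mul1mx.
Qed.

Lemma stationary_gt0 j : 0 < p 0 j.
Proof.
have [k Qk_gt0] := Q_regular.
have [i p_i_gt0] : exists i, 0 < p 0 i.
  case: (pickP (fun i => 0 < p 0 i)) => [i|p_le0]; first by exists i.
  suff: \sum_j p 0 j = 0 by rewrite p_sum1 => /eqP; rewrite oner_eq0.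
  by apply: big1 => i _; apply/eqP; rewrite eq_le p_ge0 andbT leNgt p_le0.
rewrite -(expmx_fixl k p_stationary) mxE (bigD1 i) //=.
have : 0 <= \sum_(l | l != i) p 0 l * (Q ^+ k) l j.
  by apply: sumr_ge0 => l _; rewrite mulr_ge0 ?expmx_ge0.
have := mulr_gt0 p_i_gt0 (Qk_gt0 i j); lra.
Qed.

(* A kernel vector of [fundmx] is [Q]-harmonic and annihilated by [p]; by the maximum
   principle for the positive matrix [Q ^+ k] it is constant, hence zero. *)
Lemma fundmx_unit : fundmx \in unitmx.
Proof.
rewrite unitmxE unitfE -det_tr; apply/negP => /det0P [v v_neq0 vF].
have Fz : fundmx *m v^T = 0 by rewrite -[fundmx]trmxK -trmx_mul vF trmx0.
have pz : p *m v^T = 0 by rewrite -stationary_fundmx -mulmxA Fz mulmx0.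
have Qz : Q *m v^T = v^T.
  move: Fz; rewrite /fundmx !mulmxDl mulNmx mul1mx -mulmxA pz mulmx0 addr0.
  by move/eqP; rewrite subr_eq0 => /eqP.
have [j0 _] : exists j0 : 'I_n, true.
  case: (pickP (fun j : 'I_n => true)) => [j0|none]; first by exists j0.
  by case/eqP: v_neq0; apply/rowP => j; have := none j.
have [k Qk_gt0] := Q_regular.
case: (arg_maxP (fun j => v 0 j) (isT : predT j0)) => i0 _ v_max.
have v_const j : v 0 j = v 0 i0.
  apply: (avg_eq_max_const (Qk_gt0 i0)) => [|l|].
  - have := congr1 (fun M : 'cV[R]_n => M i0 0) (expmx_fixr k stochastic_ones).
    by rewrite mulmx_ones mxE.
  - exact: v_max.
  - have := congr1 (fun M : 'cV[R]_n => M i0 0) (expmx_fixr k Qz); rewrite !mxE => <-.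
    by apply: eq_bigr => l _; rewrite mxE.
have v_i0 : v 0 i0 = 0.
  have := congr1 (fun M : 'M[R]_1 => M 0 0) pz; rewrite !mxE => <-.
  by rewrite -[LHS]mul1r -p_sum1 mulr_suml; apply: eq_bigr => j _; rewrite !mxE v_const.
by case/eqP: v_neq0; apply/rowP => j; rewrite v_const v_i0 mxE.
Qed.

Lemma fundinv_ones : Z *m e = e.
Proof.
have := congr1 (mulmx^~ e) (mulVmx fundmx_unit).
by rewrite -mulmxA fundmx_ones mul1mx.
Qed.

Lemma stationary_fundinv : p *m Z = p.
Proof.
have := congr1 (mulmx p) (mulmxV fundmx_unit).
by rewrite mulmxA stationary_fundmx mulmx1.
Qed.

Lemma fundinv_row1 i : \sum_j Z i j = 1.
Proof. by rewrite -(mulmx_ones Z i 0) fundinv_ones mxE. Qed.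

Lemma fundinv_offdiag i j : i != j -> Z i j = \sum_l Q i l * Z l j - p 0 j.
Proof.
move=> ij; have := congr1 (fun M : 'M[R]_n => M i j) (mulmxV fundmx_unit).
rewrite /fundmx !mulmxDl mulNmx mul1mx -mulmxA stationary_fundinv.
rewrite !mxE (negbTE ij) mulr0n big_ord1 mxE mul1r [p ord0 j](_ : _ = p 0 j) //; lra.
Qed.

(* Off the diagonal, an entry of a column of [Z] is an average of that column minus
   [p 0 j > 0], so it cannot be the maximum. *)
Lemma fundinv_le_diag i j : Z i j <= Z j j.
Proof.
case: (arg_maxP (fun l => Z l j) (isT : predT i)) => i0 _ Z_max.
have [i0_j|i0j] := eqVneq i0 j; first by have := Z_max i isT; rewrite i0_j.
have : \sum_l Q i0 l * Z l j <= Z i0 j.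
  rewrite -[leRHS]mul1r -(Q_row1 i0) mulr_suml.
  by apply: ler_sum => l _; apply: ler_wpM2l => //; apply: Z_max.
by have := stationary_gt0 j; rewrite (fundinv_offdiag i0j) in Z_max *; lra.
Qed.

Lemma tr_fundinv_sub1 i : \tr Z - 1 = \sum_j (Z j j - Z i j).
Proof. by rewrite sumrB fundinv_row1. Qed.

Lemma tr_fundinv_ge1 : 1 <= \tr Z.
Proof.
case: (pickP (@predT 'I_n)) => [i _|none]; last first.
  by move: p_sum1; rewrite big_pred0 // => /esym/eqP; rewrite oner_eq0.
rewrite -subr_ge0 (tr_fundinv_sub1 i); apply: sumr_ge0 => j _.
by rewrite subr_ge0 fundinv_le_diag.
Qed.

Lemma fundinv_l1_bound (q : 'rV[R]_n) : \sum_j q 0 j = 1 ->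
  \sum_j `|p 0 j - q 0 j| <= (\tr Z - 1) * \sum_j `|(q *m Q - q) 0 j|.
Proof.
move=> q_sum1; set x := q *m Q - q.
have x_sum0 : \sum_i x 0 i = 0.
  by rewrite -(mulmx_ones x 0 0) mulmxBl -mulmxA stochastic_ones subrr mxE.
have pq : p - q = x *m Z.
  suff <- : (p - q) *m fundmx = x by rewrite -mulmxA mulmxV ?fundmx_unit // mulmx1.
  rewrite mulmxBl stationary_fundmx /fundmx !mulmxDr mulmxN mulmx1 mulmxA.
  by rewrite row_mul_ones // mul1mx addrC opprD subrK opprB.
have pq_entry j : p 0 j - q 0 j = - \sum_i x 0 i * (Z j j - Z i j).
  have := congr1 (fun M : 'rV[R]_n => M 0 j) pq; rewrite !mxE => ->.
  under [in RHS]eq_bigr do rewrite mulrBr.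
  by rewrite sumrB -mulr_suml x_sum0 mul0r sub0r opprK.
have pq_le j : `|p 0 j - q 0 j| <= \sum_i `|x 0 i| * (Z j j - Z i j).
  rewrite pq_entry normrN; apply: le_trans (ler_norm_sum _ _ _) _.
  apply: ler_sum => i _; rewrite normrM ler_wpM2l //.
  by rewrite ger0_norm // subr_ge0 fundinv_le_diag.
apply: le_trans (ler_sum _ (fun j _ => pq_le j)) _.
rewrite exchange_big mulr_sumr; apply: ler_sum => i _ /=.
by rewrite -mulr_sumr -tr_fundinv_sub1 mulrC.
Qed.
End FundamentalMatrix.

Section FiniteChain.
Variables (R : realType) (S : finType) (Qc : S -> S -> R) (pi : S -> R).
Hypotheses (Qc_ge0 : forall s t, 0 <= Qc s t) (Qc_row1 : forall s, \sum_t Qc s t = 1).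
Hypotheses (Qc_ergodic : ergodic Qc) (pi_stationary : stationary Qc pi).

Definition distr_row (f : S -> R) : 'rV[R]_#|S| := \row_j f (enum_val j).

Lemma sum_distr_row f : \sum_j distr_row f 0 j = \sum_s f s.
Proof. by rewrite (big_enum_val f); apply: eq_bigr => j _; rewrite mxE. Qed.

Lemma chain_mx_ge0 i j : 0 <= chain_mx Qc i j.
Proof. by rewrite mxE. Qed.

Lemma chain_mx_row1 i : \sum_j chain_mx Qc i j = 1.
Proof.
rewrite -(Qc_row1 (enum_val i)) (big_enum_val (Qc (enum_val i))).
by apply: eq_bigr => j _; rewrite mxE.
Qed.

Lemma distr_row_stationary : distr_row pi *m chain_mx Qc = distr_row pi.
Proof.
case: pi_stationary => _ _ pi_stat; apply/rowP => j; rewrite !mxE -pi_stat.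
by rewrite (big_enum_val (fun s => pi s * Qc s (enum_val j))); apply: eq_bigr => i _; rewrite !mxE.
Qed.

Lemma kemenyE : kemeny Qc pi = \tr (invmx (fundmx (chain_mx Qc) (distr_row pi))).
Proof.
congr (\tr (invmx (_ + _))); apply/matrixP => i j.
by rewrite !mxE big_ord1 !mxE mul1r.
Qed.

Lemma distr_row_ge0 j : 0 <= distr_row pi 0 j.
Proof. by case: pi_stationary => pi_ge0 _ _; rewrite mxE. Qed.

Lemma distr_row_sum1 : \sum_j distr_row pi 0 j = 1.
Proof. by case: pi_stationary => _ pi_sum1 _; rewrite sum_distr_row. Qed.

Lemma kemeny_ge1 : 1 <= kemeny Qc pi.
Proof.
rewrite kemenyE; exact: (tr_fundinv_ge1 chain_mx_ge0 chain_mx_row1 distr_row_ge0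
  distr_row_sum1 distr_row_stationary Qc_ergodic).
Qed.

Lemma kemeny_l1_bound (q : S -> R) : \sum_s q s = 1 ->
  \sum_s `|pi s - q s| <= (kemeny Qc pi - 1) * \sum_t `|\sum_s q s * Qc s t - q t|.
Proof.
move=> q_sum1; rewrite -sum_distr_row in q_sum1.
have -> : \sum_s `|pi s - q s| = \sum_j `|distr_row pi 0 j - distr_row q 0 j|.
  by rewrite -sum_distr_row; apply: eq_bigr => j _; rewrite !mxE.
have -> : \sum_t `|\sum_s q s * Qc s t - q t| =
          \sum_j `|(distr_row q *m chain_mx Qc - distr_row q) 0 j|.
  rewrite -sum_distr_row; apply: eq_bigr => j _; rewrite !mxE -sum_distr_row.
  by congr `|_ - _|; apply: eq_bigr => i _; rewrite !mxE.
rewrite kemenyE; exact: (fundinv_l1_bound chain_mx_ge0 chain_mx_row1 distr_row_ge0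
  distr_row_sum1 distr_row_stationary Qc_ergodic q_sum1).
Qed.
End FiniteChain.

Lemma sum_dffun_prod (R : comNzSemiRingType) (I : finType) (A : I -> finType)
    (w : forall i, A i -> R) :
  \sum_(a : {dffun forall i : I, A i}) \prod_i w i (a i) = \prod_i \sum_(b : A i) w i b.
Proof.
pose w_ i : {ffun A i -> R} := [ffun b => w i b].
under [RHS]eq_bigr => i _ do
  rewrite (eq_bigr (w_ i) (fun b _ => esym (ffunE _ b))) (big_tag w_ i).
rewrite bigA_distr_big_dep -(big_fprod 1 _ w_).
rewrite (reindex (@dffun_of_fprod _ A)); last exact/onW_bij/dffun_of_fprod_bij.
by apply: eq_bigr => t _; apply: eq_bigr => i _; rewrite ffunE /dffun_of_fprod ffunE.
Qed.

Section TeamGame.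
Variables (R : realType) (S I : finType) (A : I -> finType).
Implicit Types (nu : policy R S A) (pi : S -> R) (g F : S -> jact A -> R).

Lemma jprob_ge0 nu s a : is_policy nu -> 0 <= jprob nu s a.
Proof. by move=> nu_pol; apply: prodr_ge0 => i _; exact: (nu_pol i s).1. Qed.

Lemma jprob_sum1 nu s : is_policy nu -> \sum_a jprob nu s a = 1.
Proof.
move=> nu_pol; apply: eq_trans (sum_dffun_prod (fun i b => nu i s b)) _.
by apply: big1 => i _; exact: (nu_pol i s).2.
Qed.

Lemma avgE pi nu g : avg pi nu g = \sum_s \sum_a pi s * jprob nu s a * g s a.
Proof.
by apply: eq_bigr => s _; rewrite mulr_sumr; apply: eq_bigr => a _; rewrite mulrA.
Qed.

Lemma avg_affine pi nu g1 g2 g (x y z : R) :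
  \sum_s pi s = 1 -> is_policy nu ->
  (forall s a, g s a = x * g1 s a + y * g2 s a + z) ->
  avg pi nu g = x * avg pi nu g1 + y * avg pi nu g2 + z.
Proof.
move=> pi_sum1 nu_pol gE; rewrite !avgE.
under eq_bigr do (under eq_bigr do rewrite gE !mulrDr; rewrite !big_split /=).
rewrite !big_split /= !mulr_sumr; congr (_ + _ + _).
- by apply: eq_bigr => s _; rewrite mulr_sumr; apply: eq_bigr => a _; rewrite mulrCA.
- by apply: eq_bigr => s _; rewrite mulr_sumr; apply: eq_bigr => a _; rewrite mulrCA.
- under eq_bigr do rewrite -mulr_suml -mulr_sumr jprob_sum1 // mulr1.
  by rewrite -mulr_suml pi_sum1 mul1r.
Qed.

Lemma Jmv_sub beta pi pi' mu nu r :
  \sum_s pi' s = 1 -> is_policy nu ->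
  Jmv beta pi' nu r - Jmv beta pi mu r =
  avg pi' nu (fmu beta pi mu r) - Jmv beta pi mu r
  + beta * (etaR pi' nu r - etaR pi mu r) ^+ 2.
Proof.
move=> pi'_sum1 nu_pol; set eta := etaR pi mu r; set eta' := etaR pi' nu r.
have avg_sqr c : avg pi' nu (fun s a => (r s a - c) ^+ 2) =
                 avg pi' nu (fun s a => r s a ^+ 2) - 2 * c * eta' + c ^+ 2.
  rewrite (avg_affine (g1 := fun s a => r s a ^+ 2) (g2 := r)
    (x := 1) (y := - (2 * c)) (z := c ^+ 2) pi'_sum1 nu_pol) => [|s a]; last by ring.
  by rewrite /eta' /etaR; ring.
rewrite (avg_affine (g1 := r) (g2 := fun s a => (r s a - eta) ^+ 2)
  (x := 1) (y := - beta) (z := 0) pi'_sum1 nu_pol) => [|s a]; last by rewrite /fmu -/eta; ring.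
by rewrite /Jmv /zeta -/eta' !avg_sqr -[avg pi' nu r]/eta'; ring.
Qed.

Lemma pexp_le_epsmax nu F s : `|pexp nu F s| <= epsmax nu F.
Proof. exact: le_bigmax. Qed.

Lemma epsmax_ge0 nu F : 0 <= epsmax nu F.
Proof. exact: bigmax_ge_id. Qed.

Lemma surr_sub_le pi pi' nu F :
  `|surr pi' nu F - surr pi nu F| <= epsmax nu F * \sum_s `|pi' s - pi s|.
Proof.
rewrite -sumrB mulr_sumr; apply: le_trans (ler_norm_sum _ _ _) _.
apply: ler_sum => s _; rewrite -mulrBl normrM mulrC.
by rewrite ler_wpM2r ?normr_ge0 ?pexp_le_epsmax.
Qed.

Lemma DTV_ge0 pi mu nu : (forall s, 0 <= pi s) -> 0 <= DTV pi nu mu.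
Proof.
move=> pi_ge0; apply: sumr_ge0 => s _; rewrite mulr_ge0 // mulr_ge0 ?invr_ge0 //.
exact: sumr_ge0.
Qed.

Variable P : S -> jact A -> S -> R.

Lemma surr_adv pi nu g gbar V :
  is_policy nu -> stationary (Pmu P nu) pi ->
  surr pi nu (adv P g gbar V) = avg pi nu g - gbar.
Proof.
move=> nu_pol [_ pi_sum1 pi_stat].
have pexpE s : pexp nu (adv P g gbar V) s =
    \sum_a jprob nu s a * g s a - gbar + \sum_t Pmu P nu s t * V t - V s.
  rewrite /pexp /adv /Qval; under eq_bigr do rewrite !mulrDr mulrN.
  rewrite !big_split sumrN /= -!mulr_suml jprob_sum1 // !mul1r; congr (_ + _ - _).
  rewrite /Pmu; under eq_bigr do rewrite mulr_sumr.
  rewrite exchange_big /=; apply: eq_bigr => t _; rewrite mulr_suml.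
  by apply: eq_bigr => a _; rewrite mulrA.
rewrite /surr; under eq_bigr do rewrite pexpE !mulrDr !mulrN.
rewrite !big_split !sumrN /= -mulr_suml pi_sum1 mul1r.
have -> : \sum_s pi s * \sum_t Pmu P nu s t * V t = \sum_t pi t * V t.
  under eq_bigr do rewrite mulr_sumr.
  rewrite exchange_big /=; apply: eq_bigr => t _.
  by under eq_bigr do rewrite mulrA; rewrite -mulr_suml pi_stat.
by rewrite /avg addrK.
Qed.

Hypothesis P_kernel : is_kernel P.

Lemma Pmu_ge0 nu : is_policy nu -> forall s t, 0 <= Pmu P nu s t.
Proof.
move=> nu_pol s t; apply: sumr_ge0 => a _.
by rewrite mulr_ge0 ?jprob_ge0 ?(P_kernel s a).1.
Qed.

Lemma Pmu_sum1 nu : is_policy nu -> forall s, \sum_t Pmu P nu s t = 1.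
Proof.
move=> nu_pol s; rewrite /Pmu exchange_big /=.
by under eq_bigr do rewrite -mulr_sumr (P_kernel s _).2 mulr1; exact: jprob_sum1.
Qed.

Lemma one_step_l1_le_DTV pi mu nu :
  is_policy mu -> is_policy nu -> stationary (Pmu P mu) pi ->
  \sum_t `|\sum_s pi s * Pmu P nu s t - pi t| <= 2 * DTV pi nu mu.
Proof.
move=> mu_pol nu_pol [pi_ge0 _ pi_stat].
have stepE t : \sum_s pi s * Pmu P nu s t - pi t =
    \sum_s pi s * \sum_a (jprob nu s a - jprob mu s a) * P s a t.
  rewrite -{1}(pi_stat t) -sumrB; apply: eq_bigr => s _.
  by rewrite -mulrBr /Pmu -sumrB; congr (_ * _); apply: eq_bigr => a _; rewrite mulrBl.
have step_le t : `|\sum_s pi s * Pmu P nu s t - pi t| <=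
    \sum_s pi s * \sum_a `|jprob nu s a - jprob mu s a| * P s a t.
  rewrite stepE; apply: le_trans (ler_norm_sum _ _ _) _.
  apply: ler_sum => s _; rewrite normrM ger0_norm // ler_wpM2l //.
  apply: le_trans (ler_norm_sum _ _ _) _; apply: ler_sum => a _.
  by rewrite normrM (ger0_norm ((P_kernel s a).1 t)).
apply: le_trans (ler_sum _ (fun t _ => step_le t)) _.
rewrite exchange_big /= /DTV mulr_sumr; apply: ler_sum => s _.
rewrite -mulr_sumr mulrCA [2 * _]mulrA divff ?pnatr_eq0 // mul1r ler_wpM2l //.
rewrite exchange_big /=; apply: ler_sum => a _.
by rewrite -mulr_sumr (P_kernel s a).2 mulr1.
Qed.

Lemma stationary_l1_le_DTV kstar pi pi' mu nu :
  is_policy mu -> is_policy nu -> ergodic (Pmu P nu) ->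
  stationary (Pmu P mu) pi -> stationary (Pmu P nu) pi' ->
  kemeny (Pmu P nu) pi' <= kstar ->
  \sum_s `|pi' s - pi s| <= 2 * (kstar - 1) * DTV pi nu mu.
Proof.
move=> mu_pol nu_pol nu_erg pi_stat pi'_stat kemeny_le.
have [pi_ge0 pi_sum1 _] := pi_stat.
have l1_le := kemeny_l1_bound (Pmu_ge0 nu_pol) (Pmu_sum1 nu_pol) nu_erg pi'_stat pi_sum1.
have k_ge1 := kemeny_ge1 (Pmu_ge0 nu_pol) (Pmu_sum1 nu_pol) nu_erg pi'_stat.
apply: (le_trans l1_le); rewrite -mulrA mulrCA.
apply: le_trans (ler_wpM2l _ (one_step_l1_le_DTV mu_pol nu_pol pi_stat)) _.
  by rewrite subr_ge0.
by rewrite ler_wpM2r ?mulr_ge0 ?DTV_ge0 ?lerD2r.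
Qed.
End TeamGame.

Lemma sqr_max_le (R : realDomainType) (L d c : R) : `|d - L| <= c ->
  Num.max 0 (Num.max (L - c) (- L - c)) ^+ 2 <= d ^+ 2.
Proof.
rewrite ler_norml => /andP [lo hi].
rewrite -[d ^+ 2]real_normK ?num_real // lerXn2r ?nnegrE ?le_max ?lexx //.
have d_le := ler_norm d; have Nd_le : - d <= `|d| by rewrite -normrN ler_norm.
by rewrite !ge_max normr_ge0 /=; apply/andP; split; lra.
Qed.

Unset Implicit Arguments.
Set Strict Implicit.

Theorem theorem6 (R : realType) (S I : finType) (A : I -> finType)
  (P : S -> jact A -> S -> R) (r : S -> jact A -> R) (beta : R)
  (hbeta : 0 <= beta) (hP : is_kernel P)
  (herg : forall nu : policy R S A, is_policy nu -> ergodic (Pmu P nu))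
  (kstar : R)
  (hkmax : forall (nu : policy R S A) (pinu : S -> R), is_policy nu ->
            stationary (Pmu P nu) pinu -> kemeny (Pmu P nu) pinu <= kstar)
  (hkatt : exists (nu : policy R S A) (pinu : S -> R),
            [/\ is_policy nu, stationary (Pmu P nu) pinu &
                kemeny (Pmu P nu) pinu = kstar])
  (mu mu' : policy R S A) (hmu : is_policy mu) (hmu' : is_policy mu')
  (pi pi' : S -> R) (hpi : stationary (Pmu P mu) pi)
  (hpi' : stationary (Pmu P mu') pi')
  (V Vf : S -> R)
  (hV : is_bias P mu r (etaR pi mu r) V)
  (hVf : is_bias P mu (fmu beta pi mu r) (Jmv beta pi mu r) Vf) :
  let Aeta := adv P r (etaR pi mu r) V in
  let Af := adv P (fmu beta pi mu r) (Jmv beta pi mu r) Vf in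
  let Lf := surr pi mu' Af in
  let L := surr pi mu' Aeta in
  let eps_f := epsmax mu' Af in
  let eps_eta := epsmax mu' Aeta in
  let D := DTV pi mu' mu in
  let H := Num.max 0 (Num.max (L - 2 * (kstar - 1) * eps_eta * D)
                              (- L - 2 * (kstar - 1) * eps_eta * D)) in
  Jmv beta pi' mu' r - Jmv beta pi mu r >=
    Lf - 2 * (kstar - 1) * eps_f * D + beta * H ^+ 2.
Proof.
cbv zeta; set Aeta := adv P r _ V; set Af := adv P _ _ Vf; set D := DTV pi mu' mu.
have [_ pi'_sum1 _] := hpi'.
have l1_le := stationary_l1_le_DTV hP hmu hmu' (herg mu' hmu') hpi hpi' (hkmax mu' pi' hmu' hpi').
have surr_gap F : `|surr pi' mu' F - surr pi mu' F| <= 2 * (kstar - 1) * epsmax mu' F * D.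
  apply: le_trans (surr_sub_le pi pi' mu' F) _.
  rewrite [leRHS](_ : _ = epsmax mu' F * (2 * (kstar - 1) * D)); last by ring.
  by rewrite ler_wpM2l ?epsmax_ge0.
have gainE : Jmv beta pi' mu' r - Jmv beta pi mu r =
             surr pi' mu' Af + beta * surr pi' mu' Aeta ^+ 2.
  by rewrite Jmv_sub // !surr_adv.
have := ler_wpM2l hbeta (sqr_max_le (surr_gap Aeta)).
move: (surr_gap Af); rewrite ler_norml => /andP [lo _].
rewrite gainE; lra.
Qed.
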